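(* Let $n\geq 1$, $m\geq 2$, and let $M$ be a perfect matching of $T(2n+1,2m)$. Then there is a perfect matching $M'$ of $T(2n+1,2m)$ obtained from $M$ by a finite sequence of flips such that $M'\cap E_i=\emptyset$ for some $1\leq i\leq 2m$.
   Context: $T(2n+1,2m)$ is the graph with vertices $(u_i,v_j)$, $i\in\mathbb{Z}_{2m}$, $j\in\mathbb{Z}_{2n+1}$, where $(u_i,v_j)$ is adjacent to $(u_{i+1},v_j)$ and $(u_i,v_{j+1})$, embedded in the torus with faces the $4$-cycles $(u_i,v_j)(u_{i+1},v_j)(u_{i+1},v_{j+1})(u_i,v_{j+1})$. For $1\le i\le 2m$, $E_i=\{(u_i,v_j)(u_{i+1},v_j):1\le j\le 2n+1\}$ (index $i+1$ mod $2m$). A flip of a perfect matching $M$ replaces $M$ by $M\oplus E(C)$ where $C$ is a facial $4$-cycle whose edges alternate between $M$ and not in $M$. *)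

From mathcomp Require Import all_boot.
Set Implicit Arguments. Unset Strict Implicit. Unset Printing Implicit Defensive.

(* The torus grid T(p, q) with p = 2n+1 (index j : 'I_p) and q = 2m (index i : 'I_q).
   Vertex (i, j) stands for (u_i, v_j). *)
Definition tvert (q p : nat) := ('I_q * 'I_p)%type.

(* An edge is labelled (i, j, b):
   b = true  : the edge (u_i,v_j)(u_{i+1},v_j)   (these form E_i)
   b = false : the edge (u_i,v_j)(u_i,v_{j+1}).
   For q >= 4 and p >= 3 these labels are in bijection with the edges. *)
Definition tedge (q p : nat) := ('I_q * 'I_p * bool)%type.

Definition tends q p (e : tedge q p) : tvert q p * tvert q p :=
  let: (i, j, b) := e in
  if b then ((i, j), (ordS i, j)) else ((i, j), (i, ordS j)).

Definition incident q p (e : tedge q p) (x : tvert q p) : bool :=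
  ((tends e).1 == x) || ((tends e).2 == x).

Definition perfect_matching q p (M : {set tedge q p}) : bool :=
  [forall x : tvert q p, #|[set e in M | incident e x]| == 1].

Definition face_edges q p (i : 'I_q) (j : 'I_p) : {set tedge q p} :=
  [set (i, j, true); (ordS i, j, false); (i, ordS j, true); (i, j, false)].

Definition alternating q p (M : {set tedge q p}) (i : 'I_q) (j : 'I_p) : bool :=
  [&& (i, j, true) \in M, (ordS i, j, false) \notin M,
      (i, ordS j, true) \in M & (i, j, false) \notin M]
  || [&& (i, j, true) \notin M, (ordS i, j, false) \in M,
      (i, ordS j, true) \notin M & (i, j, false) \in M].

Definition symdiff (T : finType) (A B : {set T}) : {set T} := (A :\: B) :|: (B :\: A).

Definition flip q p : rel {set tedge q p} := fun M M' =>
  [exists i : 'I_q, exists j : 'I_p,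
     alternating M i j && (M' == symdiff M (face_edges i j))].

Definition Eset q p (i : 'I_q) : {set tedge q p} := [set (i, j, true) | j : 'I_p].

(* Let the weight of a perfect matching be its number of horizontal edges,
   i.e. of edges in the sets E_i.  If every E_i meets M, some column c has
   vertices matched to the right and vertices matched to the left.  Between
   two consecutive horizontally matched vertices of a column the column is
   covered by vertical edges, so their distance is odd; as the column has odd
   length 2n+1, the sides cannot alternate all the way round, and two
   consecutive ones are matched to the same side.  By induction on their
   distance, such a pair yields either a closer pair of the same kind in the
   neighbouring column or a ladder of vertical edges between two columns,
   which flips slide down until a single face flip lowers the weight by 2.
   Induction on the weight then gives an empty E_i. *)

From mathcomp Require Import all_boot zify.
Set Implicit Arguments. Unset Strict Implicit. Unset Printing Implicit Defensive.

Lemma ordS_neq n (i : 'I_n) : 1 < n -> ordS i != i.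
Proof.
move=> n_gt1; apply/eqP => /(congr1 val) /=.
case: (ltngtP i.+1 n) => [lt_in | | e_in]; first by rewrite modn_small //; lia.
- by have := ltn_ord i; lia.
- by rewrite e_in modnn; lia.
Qed.

Lemma ord_pred_neq n (i : 'I_n) : 1 < n -> ord_pred i != i.
Proof.
move=> n_gt1; apply: contra_neq (ordS_neq (ord_pred i) n_gt1) => e.
by rewrite ord_predK e.
Qed.

Section Shift.
Variable p : nat.
Implicit Types a b : 'I_p.

Definition shift a t := iter t (@ordS p) a.

Lemma shiftS a t : shift a t.+1 = ordS (shift a t). Proof. by []. Qed.

Lemma shift_add a s t : shift (shift a s) t = shift a (t + s).
Proof. by rewrite /shift iterD. Qed.

Lemma val_shift a t : val (shift a t) = (a + t) %% p.
Proof.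
elim: t => [|t IH]; first by rewrite addn0 modn_small.
by rewrite shiftS /= IH -addn1 modnDml addn1 addnS.
Qed.

Lemma shift_inj a t u : t < p -> u < p -> (shift a t == shift a u) = (t == u).
Proof.
move=> t_lt u_lt; apply/eqP/eqP => [|-> //].
by move/(congr1 val); rewrite !val_shift => /eqP; rewrite eqn_modDl !modn_small // => /eqP.
Qed.

Lemma shift_period a : shift a p = a.
Proof. by apply: val_inj; rewrite val_shift modnDr modn_small. Qed.

Lemma shift_surj a b : exists2 t, t < p & shift a t = b.
Proof.
have p_gt0 : 0 < p by apply: leq_ltn_trans (ltn_ord a).
exists ((b + (p - a)) %% p); first by rewrite ltn_mod.
apply: val_inj; rewrite val_shift modnDmr.
have -> : a + (b + (p - a)) = b + p by have := ltn_ord a; lia.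
by rewrite modnDr modn_small.
Qed.

End Shift.

Arguments shift : simpl never.

Section FinsetCounting.
Variable T : finType.
Implicit Types A B C M F : {set T}.

Lemma in_symdiff A B x : (x \in symdiff A B) = (x \in A) (+) (x \in B).
Proof. by rewrite !inE; case: (x \in A); case: (x \in B). Qed.

Lemma symdiffIr A B C : symdiff A B :&: C = symdiff (A :&: C) (B :&: C).
Proof.
apply/setP => x; rewrite !(inE, in_symdiff).
by case: (x \in A); case: (x \in B); case: (x \in C).
Qed.

Lemma card_symdiff A B : #|symdiff A B| + 2 * #|A :&: B| = #|A| + #|B|.
Proof.
rewrite /symdiff cardsU.
have -> : (A :\: B) :&: (B :\: A) = set0.
  by apply/setP => x; rewrite !inE; case: (x \in A); case: (x \in B).
rewrite cards0 subn0 -(cardsID B A) -(cardsID A B) [B :&: A]setIC; lia.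
Qed.

Lemma card_symdiff_incident (V : finType) (inc : T -> V -> bool) M F x :
  #|[set e in M | inc e x]| = 1 ->
  #|[set e in M :&: F | inc e x]| = #|[set e in F :\: M | inc e x]| ->
  #|[set e in symdiff M F | inc e x]| = 1.
Proof.
set I := [set e | inc e x].
have restr A : [set e in A | inc e x] = A :&: I by apply/setP => e; rewrite !inE.
rewrite !restr symdiffIr => hM hbal.
have := card_symdiff (M :&: I) (F :&: I); have := cardsID M (F :&: I).
have -> : M :&: I :&: (F :&: I) = M :&: F :&: I.
  by apply/setP => e; rewrite !inE; case: (e \in M); case: (e \in F); case: (inc e x).
have -> : F :&: I :&: M = M :&: F :&: I.
  by apply/setP => e; rewrite !inE; case: (e \in M); case: (e \in F); case: (inc e x).
have -> : F :&: I :\: M = (F :\: M) :&: I.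
  by apply/setP => e; rewrite !inE; case: (e \in M); case: (e \in F); case: (inc e x).
lia.
Qed.

Lemma card_filter_uniq (s : seq T) (P : pred T) :
  uniq s -> #|[set e | (e \in s) && P e]| = count P s.
Proof.
move=> s_uniq; have -> : [set e | (e \in s) && P e] = [set e in [seq e <- s | P e]].
  by apply/setP => e; rewrite !inE mem_filter andbC.
by rewrite cardsE (card_uniqP _) ?filter_uniq // size_filter.
Qed.

Lemma card_pair_filter (a b : T) (P : pred T) :
  a != b -> #|[set e in [set a; b] | P e]| = P a + P b.
Proof.
move=> ab; have -> : [set e in [set a; b] | P e] = [set e | (e \in [:: a; b]) && P e].
  by apply/setP => e; rewrite !inE.
by rewrite card_filter_uniq /= ?inE ?ab // addn0.
Qed.

Lemma setI_pair_split A (a b c d : T) :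
  a \in A -> b \in A -> c \notin A -> d \notin A ->
  A :&: ([set a; b] :|: [set c; d]) = [set a; b] /\ ([set a; b] :|: [set c; d]) :\: A = [set c; d].
Proof.
move=> aA bA cA dA.
have neq_in x e : x \in A -> e \notin A -> (e == x) = false.
  by move=> xA; apply: contraNF => /eqP ->.
have neq_out x e : x \notin A -> e \in A -> (e == x) = false.
  by move=> xA; apply: contraTF => /eqP ->.
split; apply/setP => e; rewrite !inE; case: (boolP (e \in A)) => eA.
- by rewrite (neq_out c _ cA eA) (neq_out d _ dA eA) !orbF.
- by rewrite (neq_in a _ aA eA) (neq_in b _ bA eA).
- by rewrite (neq_out c _ cA eA) (neq_out d _ dA eA).
- by rewrite (neq_in a _ aA eA) (neq_in b _ bA eA).
Qed.

End FinsetCounting.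

Section Torus.
Variables q p : nat.
Hypothesis q_gt1 : 1 < q.
Hypothesis p_gt2 : 2 < p.
Hypothesis p_odd : odd p.

Local Notation edge := (tedge q p).
Local Notation hedge i j := (i, j, true).
Local Notation vedge i j := (i, j, false).
Local Notation cP := (@ord_pred q).
Local Notation pm := (@perfect_matching q p).

Implicit Types (M : {set edge}) (i c : 'I_q) (j r a : 'I_p).

Let colS_neq i : ordS i != i := ordS_neq i q_gt1.
Let rowS_neq j : ordS j != j := ordS_neq j (ltnW p_gt2).

Lemma incident_hedge i j c r :
  incident (hedge i j) (c, r) = (j == r) && ((i == c) || (ordS i == c)).
Proof. by rewrite /incident /= !xpair_eqE -andb_orl andbC. Qed.

Lemma incident_vedge i j c r :
  incident (vedge i j) (c, r) = (i == c) && ((j == r) || (ordS j == r)).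
Proof. by rewrite /incident /= !xpair_eqE -andb_orr. Qed.

Definition vertex_edges c r : seq edge :=
  [:: hedge c r; hedge (cP c) r; vedge c r; vedge c (ord_pred r)].

Lemma incident_vertex e c r : incident e (c, r) = (e \in vertex_edges c r).
Proof.
case: e => [[i j] []]; rewrite ?incident_hedge ?incident_vedge !inE !xpair_eqE;
  rewrite ?eqb_id ?eqbF_neg /= ?andbT ?andbF ?orbF.
- by rewrite (can2_eq (@ordSK q) (@ord_predK q)) -andb_orl andbC.
- by rewrite (can2_eq (@ordSK p) (@ord_predK p)) -andb_orr.
Qed.

Lemma vertex_edges_uniq c r : uniq (vertex_edges c r).
Proof.
rewrite /= !inE !xpair_eqE ?eqb_id ?eqbF_neg !eqxx /= ?andbT ?andbF ?orbF.
by rewrite eq_sym (ord_pred_neq c q_gt1) eq_sym (ord_pred_neq r (ltnW p_gt2)).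
Qed.

Lemma perfect_vertex M c r : pm M ->
  (hedge c r \in M) + (hedge (cP c) r \in M) + (vedge c r \in M) + (vedge c (ord_pred r) \in M) = 1.
Proof.
move/forallP/(_ (c, r))/eqP.
have -> : [set e in M | incident e (c, r)] = [set e | (e \in vertex_edges c r) && (e \in M)].
  by apply/setP => e; rewrite !in_set incident_vertex andbC.
by rewrite card_filter_uniq ?vertex_edges_uniq //= !addnA addn0.
Qed.

Definition hmatched M c r := (hedge c r \in M) || (hedge (cP c) r \in M).

Definition hgap M c a g := forall t, 0 < t < g -> ~~ hmatched M c (shift a t).

Lemma first_hmatched M c a g : 0 < g -> hmatched M c (shift a g) ->
  exists2 t, 0 < t <= g & hmatched M c (shift a t) /\ hgap M c a t.
Proof.
move=> g_gt0 hg.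
have ex : exists t, (0 < t) && hmatched M c (shift a t) by exists g; rewrite g_gt0.
case: (ex_minnP ex) => t /andP [t_gt0 ht] t_min.
exists t; first by rewrite t_gt0 t_min ?g_gt0.
split => // u /andP [u_gt0 u_lt]; apply/negP => hu.
by have := t_min u; rewrite u_gt0 hu leqNgt u_lt => /(_ isT).
Qed.

Section Matching.
Variable M : {set edge}.
Hypothesis pmM : pm M.

Lemma hmatched_vedge c r : hmatched M c r -> vedge c r \notin M.
Proof.
have := perfect_vertex c r pmM; rewrite /hmatched.
by case: (hedge c r \in M); case: (hedge (cP c) r \in M); case: (vedge c r \in M); lia.
Qed.

Lemma hmatched_vedge_pred c r : hmatched M c (ordS r) -> vedge c r \notin M.
Proof.
have := perfect_vertex c (ordS r) pmM; rewrite ordSK /hmatched.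
by case: (hedge c _ \in M); case: (hedge (cP c) _ \in M); case: (vedge c r \in M); lia.
Qed.

Lemma vedge_next c r :
  ~~ hmatched M c (ordS r) -> (vedge c (ordS r) \in M) = (vedge c r \notin M).
Proof.
have := perfect_vertex c (ordS r) pmM; rewrite ordSK /hmatched.
by case: (hedge c _ \in M); case: (hedge (cP c) _ \in M); case: (vedge c r \in M);
  case: (vedge c (ordS r) \in M); lia.
Qed.

Lemma hedge_pred_notin c r : hedge c r \in M -> hedge (cP c) r \notin M.
Proof.
have := perfect_vertex c r pmM.
by case: (hedge c r \in M); case: (hedge (cP c) r \in M); lia.
Qed.

Lemma vedge_parity c a g t : hmatched M c a -> hgap M c a g -> t < g ->
  (vedge c (shift a t) \in M) = odd t.
Proof.
move=> ha gap; elim: t => [_|t IH t_lt]; first exact/negbTE/hmatched_vedge.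
rewrite shiftS vedge_next ?IH ?(ltnW t_lt) //.
exact: gap t.+1 t_lt.
Qed.

Lemma hgap_odd c a g : 0 < g -> hmatched M c a -> hgap M c a g ->
  hmatched M c (shift a g) -> odd g.
Proof.
case: g => // g _ ha gap hg.
have := vedge_parity ha gap (ltnSn g).
by rewrite (negbTE (hmatched_vedge_pred (r := shift a g) hg)) /= => <-.
Qed.

End Matching.

Definition face_h i j : {set edge} := [set hedge i j; hedge i (ordS j)].
Definition face_v i j : {set edge} := [set vedge i j; vedge (ordS i) j].

Lemma face_edgesE i j : face_edges i j = face_h i j :|: face_v i j.
Proof.
apply/setP => e; rewrite !inE.
by case: (e == hedge i j); case: (e == vedge (ordS i) j); case: (e == hedge i (ordS j));
  case: (e == vedge i j).
Qed.

Lemma face_h_neq i j : hedge i j != hedge i (ordS j).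
Proof. by rewrite !xpair_eqE eqxx eq_sym (negbTE (rowS_neq j)). Qed.

Lemma face_v_neq i j : vedge i j != vedge (ordS i) j.
Proof. by rewrite !xpair_eqE eq_sym (negbTE (colS_neq i)). Qed.

(* Both sides are the indicator of the four corners of the face. *)
Lemma face_incidence_balance i j x :
  incident (hedge i j) x + incident (hedge i (ordS j)) x =
  incident (vedge i j) x + incident (vedge (ordS i) j) x.
Proof.
case: x => c r; rewrite !incident_hedge !incident_vedge.
have ni : ~~ ((i == c) && (ordS i == c)).
  by apply/andP => -[/eqP <- /eqP]; apply/eqP/colS_neq.
have nj : ~~ ((j == r) && (ordS j == r)).
  by apply/andP => -[/eqP <- /eqP]; apply/eqP/rowS_neq.
by move: ni nj; case: (i == c); case: (ordS i == c); case: (j == r); case: (ordS j == r).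
Qed.

Definition flip_at M i j := symdiff M (face_edges i j).

Lemma perfect_flip M i j : pm M ->
  M :&: face_edges i j = face_h i j /\ face_edges i j :\: M = face_v i j \/
  M :&: face_edges i j = face_v i j /\ face_edges i j :\: M = face_h i j ->
  pm (flip_at M i j).
Proof.
move=> pmM hsplit; apply/forallP => x; apply/eqP/card_symdiff_incident.
  exact/eqP/(forallP pmM).
case: hsplit => -[-> ->];
  by rewrite !card_pair_filter ?face_h_neq ?face_v_neq // face_incidence_balance.
Qed.

Definition horizontal : {set edge} := [set e | e.2].
Definition hweight M := #|M :&: horizontal|.

Lemma hweight_flip M i j :
  hweight (flip_at M i j) + 2 * #|M :&: face_h i j| = hweight M + 2.
Proof.
have face_hor : face_edges i j :&: horizontal = face_h i j.
  apply/setP => e; rewrite !inE; case: e => [[c r] []];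
  by rewrite /= !xpair_eqE ?eqb_id ?eqbF_neg /= ?andbT ?andbF ?orbF.
have face_h_hor : face_h i j \subset horizontal.
  by apply/subsetP => e; rewrite !inE => /orP[] /eqP ->.
have := card_symdiff (M :&: horizontal) (face_h i j).
by rewrite /hweight /flip_at symdiffIr face_hor -setIA (setIidPr face_h_hor) cards2 face_h_neq.
Qed.

Lemma flip_at_far M i j e :
  e.1.2 != j -> e.1.2 != ordS j -> (e \in flip_at M i j) = (e \in M).
Proof.
case: e => [[c r] b] /= rj rSj.
by rewrite in_symdiff !inE !xpair_eqE (negbTE rj) (negbTE rSj) !andbF /= addbF.
Qed.

Lemma flip_face_h M i j : pm M -> hedge i j \in M -> hedge i (ordS j) \in M ->
  [/\ flip M (flip_at M i j), pm (flip_at M i j) & hweight (flip_at M i j) + 2 = hweight M].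
Proof.
move=> pmM h1 h2.
have v1 : vedge i j \notin M by apply: hmatched_vedge; rewrite // /hmatched h1.
have v2 : vedge (ordS i) j \notin M by apply: hmatched_vedge; rewrite // /hmatched ordSK h1 orbT.
have [MF FM] := setI_pair_split h1 h2 v1 v2.
split.
- apply/existsP; exists i; apply/existsP; exists j.
  by rewrite /alternating h1 h2 (negbTE v1) (negbTE v2) eqxx.
- by apply: perfect_flip; rewrite // face_edgesE; left.
- have := hweight_flip M i j.
  by rewrite (setIidPr _) ?cards2 ?face_h_neq ?subUset ?sub1set ?h1 ?h2 //=; lia.
Qed.

Lemma flip_face_v M i j : pm M -> vedge i j \in M -> vedge (ordS i) j \in M ->
  [/\ flip M (flip_at M i j), pm (flip_at M i j) & hweight (flip_at M i j) = hweight M + 2].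
Proof.
move=> pmM v1 v2.
have h1 : hedge i j \notin M.
  by apply: contraL v1 => h; apply: hmatched_vedge; rewrite // /hmatched h.
have h2 : hedge i (ordS j) \notin M.
  by apply: contraL v1 => h; apply: hmatched_vedge_pred; rewrite // /hmatched h.
have [MF FM] := setI_pair_split v1 v2 h1 h2.
split.
- apply/existsP; exists i; apply/existsP; exists j.
  by rewrite /alternating v1 v2 (negbTE h1) (negbTE h2) eqxx orbT.
- by apply: perfect_flip; rewrite // face_edgesE setUC; right.
- have MH0 : M :&: face_h i j = set0.
    apply/setP => e; rewrite !inE; apply/andP => -[eM /orP[] /eqP ee].
    + by move: eM; rewrite ee (negbTE h1).
    + by move: eM; rewrite ee (negbTE h2).
  by have := hweight_flip M i j; rewrite MH0 cards0 muln0 addn0.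
Qed.

Definition reducible M :=
  exists M', [/\ connect (@flip q p) M M', pm M' & hweight M' < hweight M].

(* Flip the face at rows 1-2, then the one at rows 0-1. *)
Lemma ladder_step M i a : pm M -> hedge i (shift a 0) \in M ->
  vedge i (shift a 1) \in M -> vedge (ordS i) (shift a 1) \in M ->
  exists M2, [/\ connect (@flip q p) M M2, pm M2, hweight M2 = hweight M,
    hedge i (shift a 2) \in M2 &
    forall e t, e.1.2 = shift a t -> 2 < t < p -> (e \in M2) = (e \in M)].
Proof.
move=> pmM h0 v1 v1'.
have row_neq t u : t <= 2 -> u <= 2 -> t != u -> shift a t != shift a u.
  by move=> t_le u_le tu; rewrite shift_inj // (leq_ltn_trans _ p_gt2).
have [fl1 pm1 w1] := flip_face_v pmM v1 v1'.
set M1 := flip_at M i (shift a 1).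
have h1 : hedge i (shift a 1) \notin M.
  by apply: contraL v1 => h; apply: hmatched_vedge; rewrite // /hmatched h.
have h2 : hedge i (shift a 2) \notin M.
  by apply: contraL v1 => h; apply: hmatched_vedge_pred; rewrite // /hmatched h.
have h0' : hedge i (shift a 0) \in M1.
  by rewrite flip_at_far; [exact: h0 | apply: (row_neq 0 1) | apply: (row_neq 0 2)].
have h1' : hedge i (shift a 1) \in M1.
  by rewrite in_symdiff (negbTE h1) face_edgesE !inE eqxx.
have [fl2 pm2 w2] := flip_face_h pm1 h0' h1'.
exists (flip_at M1 i (shift a 0)); split => //.
- exact: connect_trans (connect1 fl1) (connect1 fl2).
- by apply/eqP; rewrite -(eqn_add2r 2) w2 w1.
- rewrite flip_at_far; [|apply: (row_neq 2 0) | apply: (row_neq 2 1)] => //.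
  by rewrite in_symdiff (negbTE h2) face_edgesE !inE eqxx orbT.
move=> e t e_row /andP [t_gt2 t_lt].
have off u : u <= 2 -> e.1.2 != shift a u.
  move=> u_le; rewrite e_row shift_inj // ?(leq_ltn_trans u_le p_gt2) //.
  by rewrite gtn_eqF // (leq_ltn_trans u_le t_gt2).
by rewrite !flip_at_far ?(off 0) ?(off 1) ?(off 2).
Qed.

Lemma ladder_reducible g M i a : pm M -> odd g -> g < p ->
  hedge i (shift a 0) \in M -> hedge i (shift a g) \in M ->
  (forall t, t < g -> odd t ->
     vedge i (shift a t) \in M /\ vedge (ordS i) (shift a t) \in M) ->
  reducible M.
Proof.
elim/ltn_ind: g M a => g IH M a pmM g_odd g_lt h0 hg rungs.
have [g_le2 | g_gt2] := leqP g 2.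
  have g1 : g = 1 by case: g g_odd g_le2 {IH g_lt hg rungs} => [|[|[|]]].
  rewrite g1 in hg; have [fl pm' w'] := flip_face_h pmM h0 hg.
  by exists (flip_at M i (shift a 0)); split => //; [exact: connect1 | rewrite -w' addn2].
have [v1 v1'] := rungs 1 (ltnW g_gt2) isT.
have [M2 [flips pm2 w2 h2 far]] := ladder_step pmM h0 v1 v1'.
have lt_g : g - 2 < g by rewrite ltn_subrL (ltn_trans _ g_gt2).
have odd_g : odd (g - 2) by rewrite oddB ?g_odd // ltnW.
have lt_p : g - 2 < p := leq_ltn_trans (leq_subr 2 g) g_lt.
have hg2 : hedge i (shift (shift a 2) (g - 2)) \in M2.
  by rewrite shift_add subnK ?(far _ g) ?g_gt2 // ltnW.
have rungs2 t : t < g - 2 -> odd t ->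
    vedge i (shift (shift a 2) t) \in M2 /\ vedge (ordS i) (shift (shift a 2) t) \in M2.
  move=> t_lt t_odd; have t2_lt : t + 2 < g by rewrite addnC -ltn_subRL.
  have t2_bounds : 2 < t + 2 < p by rewrite (ltn_trans t2_lt g_lt) addn2 !ltnS odd_gt0.
  by rewrite shift_add !(far _ (t + 2)) //; apply: (rungs _ t2_lt); rewrite oddD t_odd.
have [M3 [flips' pm3 w3]] := IH (g - 2) lt_g M2 (shift a 2) pm2 odd_g lt_p h2 hg2 rungs2.
by exists M3; split; [exact: connect_trans flips flips' | | rewrite -w2].
Qed.

(* Side s = true is the right neighbour ordS c, s = false the left one cP c;
   the horizontal edges between c and ncol s c lie in column hcol s c. *)
Definition hcol (s : bool) c := if s then c else cP c.
Definition ncol (s : bool) c := if s then ordS c else cP c.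

Lemma hcol_ncol s c : hcol (~~ s) (ncol s c) = hcol s c.
Proof. by case: s; rewrite /= ?ordSK. Qed.

Lemma hmatchedE s M c r :
  hmatched M c r = (hedge (hcol s c) r \in M) || (hedge (hcol (~~ s) c) r \in M).
Proof. by case: s; rewrite // orbC. Qed.

Lemma hedge_side M c r : hmatched M c r -> hedge (hcol (hedge c r \in M) c) r \in M.
Proof. by rewrite /hmatched; case hc: (hedge c r \in M) => //=; rewrite hc. Qed.

(* In the neighbouring column, either no vertex strictly between the pair is
   matched horizontally and the two columns form a ladder, or the first two
   such vertices form a closer pair matched away from c. *)
Lemma hgap_reducible s g M c a : pm M -> 0 < g < p ->
  hedge (hcol s c) (shift a 0) \in M -> hedge (hcol s c) (shift a g) \in M ->
  hgap M c a g -> reducible M.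
Proof.
elim/ltn_ind: g c a => g IH c a pmM /andP [g_gt0 g_lt] h0 hg gap.
set d := ncol s c.
have hm_c r : hedge (hcol s c) r \in M -> hmatched M c r.
  by move=> h; rewrite (hmatchedE s) h.
have hm_d r : hedge (hcol s c) r \in M -> hmatched M d r.
  by move=> h; rewrite (hmatchedE (~~ s)) hcol_ncol h.
have g_odd : odd g := hgap_odd pmM g_gt0 (hm_c _ h0) gap (hm_c _ hg).
have d_side t : 0 < t < g -> hmatched M d (shift a t) -> hedge (hcol s d) (shift a t) \in M.
  move=> t_bd; rewrite (hmatchedE (~~ s)) hcol_ncol negbK.
  suff /negbTE -> : hedge (hcol s c) (shift a t) \notin M by [].
  by apply: contra (gap t t_bd); apply: hm_c.
have [t1 /andP [t1_gt0 t1_le] [hm1 gap1]] := first_hmatched g_gt0 (hm_d _ hg).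
case: (ltnP t1 g) => [t1_lt | t1_ge].
  have t1_odd : odd t1 := hgap_odd pmM t1_gt0 (hm_d _ h0) gap1 hm1.
  have hm_g : hmatched M d (shift (shift a t1) (g - t1)).
    by rewrite shift_add subnK ?(ltnW t1_lt) ?hm_d.
  have rest_gt0 : 0 < g - t1 by rewrite subn_gt0.
  have [u /andP [u_gt0 u_le] [hm2 gap2]] := first_hmatched rest_gt0 hm_g.
  case: (ltnP u (g - t1)) => [u_lt | u_ge].
    have u_lt_g : u < g := leq_trans u_lt (leq_subr _ _).
    apply: (IH u u_lt_g d (shift a t1)) => //.
    - by rewrite u_gt0 (ltn_trans u_lt_g g_lt).
    - by apply: d_side; rewrite ?t1_gt0.
    - rewrite shift_add; apply: d_side; last by rewrite -shift_add.
      by rewrite addn_gt0 t1_gt0 orbT addnC -ltn_subRL.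
  have := hgap_odd pmM u_gt0 hm1 gap2 hm2.
  have -> : u = g - t1 by apply/eqP; rewrite eqn_leq u_le.
  by rewrite oddB ?(ltnW t1_lt) // g_odd t1_odd.
have t1g : t1 = g by apply/eqP; rewrite eqn_leq t1_le.
rewrite {}t1g in gap1.
apply: (ladder_reducible pmM g_odd g_lt h0 hg) => t t_lt t_odd.
have := vedge_parity pmM (hm_c _ h0) gap t_lt.
have := vedge_parity pmM (hm_d _ h0) gap1 t_lt.
rewrite /d t_odd; case: (s) => /=; rewrite ?ord_predK; tauto.
Qed.

Lemma column_reducible M c a b : pm M ->
  hedge c a \in M -> hedge (cP c) b \in M -> reducible M.
Proof.
move=> pmM ha hb.
(* Gaps are odd, so if consecutive sides always differ, the side at offset s
   is determined by the parity of s; back at offset p this contradicts p odd. *)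
suff walk d s : s + d = p -> hmatched M c (shift a s) ->
    (hedge c (shift a s) \in M) = ~~ odd s -> reducible M.
  by apply: (walk p 0) => //; rewrite /hmatched ha.
elim/ltn_ind: d s => -[_ s | d IH s] sd hms side.
  by move: side; rewrite addn0 in sd; rewrite sd shift_period ha p_odd.
have hm_end : hmatched M c (shift (shift a s) d.+1).
  by rewrite shift_add addnC sd shift_period /hmatched ha.
have [g /andP [g_gt0 g_le] [hmg gap]] := first_hmatched (ltn0Sn d) hm_end.
have g_odd : odd g := hgap_odd pmM g_gt0 hms gap hmg.
have g_lt : g < p.
  rewrite ltn_neqAle (leq_trans g_le) ?andbT; last by rewrite -sd leq_addl.
  apply/eqP => g_p.
  have s0 : s = 0 by clear -sd g_le g_p; lia.
  have [t t_lt tb] := shift_surj a b.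
  have t_gt0 : 0 < t.
    case: t tb {t_lt} => // tb0; have := hedge_pred_notin pmM ha.
    by rewrite -[a]/(shift a 0) tb0 hb.
  apply: (negP (gap t _)); first by rewrite t_gt0 g_p.
  by rewrite s0 shift_add addn0 tb /hmatched hb orbT.
rewrite shift_add in hmg.
case: (boolP ((hedge c (shift a s) \in M) == (hedge c (shift a (g + s)) \in M))) => [/eqP same | diff].
  apply: (hgap_reducible (s := hedge c (shift a s) \in M) pmM _ _ _ gap).
  - by rewrite g_gt0.
  - exact: hedge_side.
  - by rewrite shift_add same; apply: hedge_side.
apply: (IH (d.+1 - g) _ (g + s)) => //.
- by rewrite ltn_subrL g_gt0.
- by rewrite -sd addnAC subnKC // addnC.
- by move: diff; rewrite side oddD g_odd; case: (hedge c _ \in M); case: (odd s).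
Qed.

Lemma setI_Eset_eq0 M i : (M :&: Eset p i == set0) = [forall j, hedge i j \notin M].
Proof.
apply/eqP/forallP => [M_E j | notin].
  apply/negP => hj; have : hedge i j \in M :&: Eset p i.
    by rewrite inE hj; apply/imsetP; exists j.
  by rewrite M_E inE.
apply/setP => e; rewrite !inE; apply/negP => /andP [eM /imsetP [j _ ej]].
by move: eM; rewrite ej (negbTE (notin j)).
Qed.

Lemma flip_to_empty_column M : pm M ->
  exists M', [/\ connect (@flip q p) M M', pm M' & exists i, M' :&: Eset p i = set0].
Proof.
move=> pmM; have [w] := ubnP (hweight M); elim: w M pmM => // w IH M pmM /ltnSE w_le.
case: (boolP [exists i, M :&: Eset p i == set0]) => [/existsP [i /eqP Mi] | full].
  by exists M; split => //; exists i.
have row i : exists j, hedge i j \in M.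
  move: full; rewrite negb_exists => /forallP /(_ i).
  by rewrite setI_Eset_eq0 negb_forall => /existsP [j]; rewrite negbK; exists j.
have c : 'I_q := Ordinal (ltnW q_gt1).
have [[a ha] [b hb]] := (row c, row (cP c)).
have [M2 [flips pm2 w2]] := column_reducible pmM ha hb.
have [M' [flips' pm' empty']] := IH M2 pm2 (leq_trans w2 w_le).
by exists M'; split => //; exact: connect_trans flips flips'.
Qed.

End Torus.

Theorem lemma4p2 (n m : nat) (hn : 1 <= n) (hm : 2 <= m)
  (M : {set tedge (2 * m) (2 * n + 1)}) :
  perfect_matching M ->
  exists M' : {set tedge (2 * m) (2 * n + 1)},
    [/\ connect (@flip (2 * m) (2 * n + 1)) M M', perfect_matching M' &
        exists i : 'I_(2 * m), M' :&: Eset (2 * n + 1) i = set0].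
Proof.
apply: flip_to_empty_column.
- by lia.
- by lia.
- by rewrite oddD oddM.
Qed.
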